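(* Let $\rho:\mathbb{Z}\to[0,\infty)$ be a weight with finite moments, $f,g$ polynomials with $\deg f\le2$, $\deg g\le1$, $f(x+1)\rho(x+1)-f(x)\rho(x)=g(x)\rho(x)$ on $\mathbb{Z}$, and $\rho f$ vanishing at the end points of the support of $\rho$. Let $\{p_n\}$ be the monic orthogonal polynomials for $\rho$ with $\sum_xp_mp_n\rho=h_n\delta_{nm}$, $h_n>0$; let $\mathcal{A}_{\rm l}=g(x)T+f(x)(\Delta+\nabla)$, $c_n:=-\sum_xp_{n+1}(x)(\mathcal{A}_{\rm l}p_n)(x)\rho(x)$, $\omega(x)=f(x+1)\rho(x+1)$, and assume the Pfaffians $\mathrm{Pf}[\sum_x(x^i(x+1)^j-(x+1)^ix^j)\omega(x)]_{i,j=0}^{2n-1}$ are nonzero for all $n\ge1$. Let $Q_{2n+1}=p_{2n+1}$, $Q_{2n}=\sum_{l=0}^n\big(\prod_{j=l}^{n-1}c_{2j+1}/c_{2j}\big)p_{2l}$, $u_n=c_{2n}$, and for $N\ge1$ $$S_N(x,y)=\sum_{i=0}^{N-1}\frac{1}{u_i}\big(Q_{2i}(x)Q_{2i+1}(y)-Q_{2i}(y)Q_{2i+1}(x)\big).$$ Then, with $t_{2N,2N-2}:=-c_{2N-1}/c_{2N-2}$, $$\sum_{m=0}^{N-1}\frac{p_{2m}(x)p_{2m}(y)}{h_{2m}}+\sum_{m=0}^{N-1}\frac{p_{2m+1}(x)p_{2m+1}(y)}{h_{2m+1}}=\mathcal{A}^{(y)}_{\rm l}S_N(x,y)-\frac{t_{2N,2N-2}}{h_{2N}}p_{2N}(y)Q_{2N-2}(x),$$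 where $\mathcal{A}^{(y)}_{\rm l}$ denotes $\mathcal{A}_{\rm l}$ acting in the variable $y$.
   Context: $T\phi(x)=\phi(x+1)$, $\Delta\phi(x)=\phi(x+1)-\phi(x)$, $\nabla\phi(x)=\phi(x)-\phi(x-1)$. *)

From HB Require Import structures.
From mathcomp Require Import all_boot all_order all_algebra all_fingroup.
From mathcomp Require Import all_classical all_reals all_analysis.
From mathcomp Require Import zify.
Set Implicit Arguments. Unset Strict Implicit. Unset Printing Implicit Defensive.
Import Order.TTheory GRing.Theory Num.Theory numFieldNormedType.Exports.
Local Open Scope ring_scope.

Section Defs.
Variable R : realType.

Definition zsummable (F : int -> R) : Prop :=
  cvgn (series (fun k : nat => `|F k%:Z|)) /\
  cvgn (series (fun k : nat => `|F (- (k.+1)%:Z)|)).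

Definition zsum (F : int -> R) : R :=
  limn (series (fun k : nat => F k%:Z)) +
  limn (series (fun k : nat => F (- (k.+1)%:Z))).

Definition finite_moments (rho : int -> R) : Prop :=
  forall k : nat, zsummable (fun x => (x%:~R) ^+ k * rho x).

Definition Al (f g : {poly R}) (phi : R -> R) (x : R) : R :=
  g.[x] * phi (x + 1) + f.[x] * ((phi (x + 1) - phi x) + (phi x - phi (x - 1))).

Lemma pf_ord_proof (n : nat) (i : 'I_n) (b : bool) : (i.*2 + b < n.*2)%N.
Proof. have := ltn_ord i; case: b => /=; lia. Qed.

Definition pf_idx (n : nat) (i : 'I_n) (b : bool) : 'I_(n.*2) :=
  Ordinal (pf_ord_proof i b).

Definition pfaffian (n : nat) (A : 'M[R]_(n.*2)) : R :=
  ((2 ^ n * n`!)%:R)^-1 *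
  \sum_(s : 'S_(n.*2)) (-1) ^+ s *
     \prod_(i < n) A (s (pf_idx i false)) (s (pf_idx i true)).

Definition skew_moment_mx (omega : int -> R) (n : nat) : 'M[R]_(n.*2) :=
  \matrix_(i < n.*2, j < n.*2)
     zsum (fun x => ((x%:~R) ^+ i * (x%:~R + 1) ^+ j
                     - (x%:~R + 1) ^+ i * (x%:~R) ^+ j) * omega x).

Definition is_left_endpoint (rho : int -> R) (a : int) : Prop :=
  rho a != 0 /\ forall y : int, y < a -> rho y = 0.
Definition is_right_endpoint (rho : int -> R) (b : int) : Prop :=
  rho b != 0 /\ forall y : int, b < y -> rho y = 0.

End Defs.

From HB Require Import structures.
From mathcomp Require Import all_boot all_order all_algebra all_fingroup.
From mathcomp Require Import all_classical all_reals all_analysis.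
From mathcomp Require Import ring lra polyrcf zify.
Import Order.TTheory GRing.Theory Num.Theory numFieldNormedType.Exports.
Local Open Scope classical_set_scope.
Local Open Scope ring_scope.
Set Implicit Arguments.
Unset Strict Implicit.

(* The operator A_l is skew-adjoint for the pairing <q> = sum_x q(x) rho(x) on
   polynomials: by the Pearson equation, q A_l r + r A_l q is a discrete derivative
   of f(x) (q(x-1) r(x) + r(x-1) q(x)) rho(x), which vanishes at infinity because
   rho has finite moments. Since A_l raises degrees by at most one, skewness yields the
   three-term relation A_l p_n = -(c_n/h_{n+1}) p_{n+1} + (c_{n-1}/h_{n-1}) p_{n-1}.
   The weights in Q_{2n} make A_l Q_{2n} a multiple of p_{2n+1}, and then
   A_l S_N telescopes to the Christoffel-Darboux sum.
   The divisions are legitimate because c_n = - g_1 h_{n+1} with g_1 <> 0. Indeed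
   rho has unbounded support, and a nonnegative weight with
   rho(x+1)/rho(x) = B(x)/A(x), where A and B share degree and leading
   coefficient, decays only polynomially, contradicting finite moments; this
   rules out deg f = 2 and, when f <> 0, a constant g. Finally f <> 0, for
   otherwise the first Pfaffian vanishes. *)

Section ZSum.
Variable R : realType.
Implicit Types F G : int -> R.

Lemma zsummable0 : zsummable (fun _ => 0 : R).
Proof.
have series0 : series (fun=> 0 : R) = fun=> 0.
  by apply/funext => n; rewrite /series /= big1.
by split; apply: (series_le_cvg (v_ := fun=> 0)); rewrite ?series0 ?normr0 //;
  exact: is_cvg_cst.
Qed.

Lemma zsummableD F G : zsummable F -> zsummable G -> zsummable (fun x => F x + G x).
Proof.
move=> [F1 F2] [G1 G2]; split.
  apply: (series_le_cvg _ _ _ (is_cvg_seriesD F1 G1)) => n //=.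
  - exact: addr_ge0.
  - exact: ler_normD.
apply: (series_le_cvg _ _ _ (is_cvg_seriesD F2 G2)) => n //=.
- exact: addr_ge0.
- exact: ler_normD.
Qed.

Lemma zsummableZ a F : zsummable F -> zsummable (fun x => a * F x).
Proof.
move=> [F1 F2]; split.
  apply: (series_le_cvg (v_ := fun k => `|a| * `|F k%:Z|)) => [//|n|n|].
  - exact: mulr_ge0.
  - by rewrite normrM.
  - exact: (is_cvg_seriesZ (k := `|a|) F1).
apply: (series_le_cvg (v_ := fun k => `|a| * `|F (- k.+1%:Z)|)) => [//|n|n|].
- exact: mulr_ge0.
- by rewrite normrM.
- exact: (is_cvg_seriesZ (k := `|a|) F2).
Qed.

Lemma eq_zsum F G : F =1 G -> zsum F = zsum G.
Proof. by move=> /funext ->. Qed.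

Lemma zsum0 : zsum (fun _ => 0 : R) = 0.
Proof.
rewrite /zsum; have -> : series (fun=> 0 : R) = fun=> 0.
  by apply/funext => n; rewrite /series /= big1.
by rewrite lim_cst ?addr0.
Qed.

Lemma zsumD F G : zsummable F -> zsummable G ->
  zsum (fun x => F x + G x) = zsum F + zsum G.
Proof.
move=> [F1 F2] [G1 G2]; rewrite /zsum.
rewrite (lim_seriesD (normed_cvg F1) (normed_cvg G1)).
by rewrite (lim_seriesD (normed_cvg F2) (normed_cvg G2)) addrACA.
Qed.

Lemma zsumZ a F : zsummable F -> zsum (fun x => a * F x) = a * zsum F.
Proof.
move=> [F1 F2]; rewrite /zsum mulrDr.
by rewrite (lim_seriesZ a (normed_cvg F1)) (lim_seriesZ a (normed_cvg F2)).
Qed.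

Lemma zsummable_cvg0 F : zsummable F ->
  (fun n : nat => F n%:Z) @ \oo --> 0 /\ (fun n : nat => F (- n%:Z)) @ \oo --> 0.
Proof.
move=> [F1 F2]; split; apply/norm_cvg0P; first exact: cvg_series_cvg_0.
by rewrite -cvg_shiftS; exact: cvg_series_cvg_0.
Qed.

Lemma zsum_telescope F :
  (fun n : nat => F n%:Z) @ \oo --> 0 -> (fun n : nat => F (- n%:Z)) @ \oo --> 0 ->
  zsum (fun x => F (x + 1) - F x) = 0.
Proof.
move=> F0r F0l; rewrite /zsum.
have -> : series (fun k : nat => F (k%:Z + 1) - F k%:Z) = fun n => F n%:Z - F 0.
  apply/funext => n; rewrite seriesEnat /= -(telescope_sumr (fun k : nat => F k%:Z)) //.
  by apply: eq_bigr => k _; rewrite -addn1 PoszD.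
have -> : series (fun k : nat => F (- k.+1%:Z + 1) - F (- k.+1%:Z))
          = fun n => F 0 - F (- n%:Z).
  apply/funext => n; rewrite seriesEnat /=.
  have := @telescope_sumr _ 0%N n (fun k : nat => - F (- k%:Z)) (leq0n n).
  rewrite /= oppr0 opprK addrC => <-.
  by apply: eq_bigr => k _; rewrite opprK addrC -addn1 PoszD opprD addrNK.
rewrite (cvg_lim _ (cvgB F0r (cvg_cst (F 0)))) //.
by rewrite (cvg_lim _ (cvgB (cvg_cst (F 0)) F0l)) // sub0r subr0 addNr.
Qed.

End ZSum.

Lemma size_sub_same_lead (R : nzRingType) (a b : {poly R}) :
  size a = size b -> lead_coef a = lead_coef b -> (size (a - b)%R <= (size a).-1)%N.
Proof.
move=> sab lab; apply/leq_sizeP => j hj; rewrite coefB.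
have [->|hne] := eqVneq j (size a).-1.
  by rewrite -lead_coefE lab lead_coefE sab subrr.
have ha : (size a <= j)%N by move: hj hne; clear; lia.
by rewrite !nth_default ?subrr // -sab.
Qed.

Lemma infinitely_often_or (P Q : nat -> Prop) :
  (forall N, exists2 n, (N <= n)%N & P n \/ Q n) ->
  (forall N, exists2 n, (N <= n)%N & P n) \/ (forall N, exists2 n, (N <= n)%N & Q n).
Proof.
move=> PQ; have [|] := pselect (forall N, exists2 n, (N <= n)%N & P n); first by left.
move=> /existsNP [N0 notP]; right => N.
have [n Nn [Pn|Qn]] := PQ (maxn N0 N).
  by exfalso; apply: notP; exists n => //; exact: leq_trans (leq_maxl _ _) Nn.
by exists n => //; exact: leq_trans (leq_maxr _ _) Nn.
Qed.

Lemma lead_coef_size_leq (R : nzSemiRingType) (p : {poly R}) n :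
  (size p <= n.+1)%N -> p`_n != 0 -> lead_coef p = p`_n.
Proof.
move=> sp pn; suff sp1 : size p = n.+1 by rewrite lead_coefE sp1.
apply/anti_leq; rewrite sp ltnNge; apply: contra pn => /leq_sizeP/(_ n (leqnn n)) ->.
by [].
Qed.

Section RationalRecurrence.
Variable R : realType.

Definition rising (m : nat) : {poly R} := \prod_(j < m) ('X + j.+1%:R%:P).

Lemma horner_rising m x : (rising m).[x] = \prod_(j < m) (x + j.+1%:R).
Proof. by rewrite horner_prod; apply: eq_bigr => j _; rewrite !hornerE. Qed.

Lemma horner_risingS m x :
  (rising m).[x + 1] * (x + 1) = (rising m).[x] * (x + m.+1%:R).
Proof.
rewrite !horner_rising; elim: m => [|m IH]; first by rewrite !big_ord0 !mul1r.
rewrite big_ord_recr /= -mulrA [_ * (x + 1)]mulrC mulrA IH.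
by rewrite [in RHS]big_ord_recr /= (mulrS 1 m.+1); ring.
Qed.

Lemma rising_gt0 m (n : nat) : 0 < (rising m).[n%:R].
Proof.
rewrite horner_rising; apply: prodr_gt0 => j _.
by rewrite (@lt_le_trans _ _ j.+1%:R) ?ltr0Sn ?lerDr.
Qed.

(* (X + m + 1) B - (X + 1) A = (X + 1) (B - A) + m B has degree at most deg A,
   and its coefficient of that degree is positive for m large. *)
Lemma eventually_rising_ratio (A B : {poly R}) :
  size A = size B -> lead_coef A = lead_coef B -> 0 < lead_coef A ->
  exists m, \forall n \near \oo,
    0 < A.[n%:R] /\ (n%:R + 1) * A.[n%:R] <= (n%:R + m.+1%:R) * B.[n%:R].
Proof.
move=> sAB lAB lA_gt0; set l := lead_coef A in lAB lA_gt0.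
have A_neq0 : A != 0 by rewrite -lead_coef_eq0 gt_eqF.
set d := (size A).-1; have sA : size A = d.+1 by rewrite /d prednK // size_poly_gt0.
have sE : (size (B - A)%R <= d)%N.
  by have := size_sub_same_lead (esym sAB) (esym lAB); rewrite -sAB.
set e := (('X + 1) * (B - A))`_d.
have [m em_gt0] : exists m : nat, 0 < e + m%:R * l.
  exists (Num.truncn (`|e| / l)).+1.
  have : `|e| / l < (Num.truncn (`|e| / l)).+1%:R by apply: truncnS_gt.
  rewrite ltr_pdivrMr // => ?; have : - e <= `|e| by rewrite -normrN ler_norm.
  lra.
pose D := ('X + 1) * (B - A) + m%:R *: B.
have DE x : D.[x] = (x + m.+1%:R) * B.[x] - (x + 1) * A.[x].
  by rewrite /D !hornerE -natr1; ring.
have sD : (size D <= d.+1)%N.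
  rewrite /D; apply: (leq_trans (size_polyD _ _)); rewrite geq_max; apply/andP; split.
    by apply: (leq_trans (size_polyMleq _ _)); rewrite -polyC1 size_XaddC.
  by apply: (leq_trans (size_scale_leq _ _)); rewrite -sAB sA.
have Dd : D`_d = e + m%:R * l by rewrite coefD coefZ lAB lead_coefE -sAB.
have lD_gt0 : 0 < lead_coef D by rewrite (lead_coef_size_leq sD) Dd // gt_eqF.
have [xD HD] := poly_pinfty_gt_lc lD_gt0.
have [xA HA] := poly_pinfty_gt_lc lA_gt0.
exists m; near=> n; split.
  by apply: lt_le_trans lA_gt0 (HA _ _); near: n; exact: nbhs_infty_ger.
rewrite -subr_ge0 -DE; apply: le_trans (ltW lD_gt0) (HD _ _).
by near: n; exact: nbhs_infty_ger.
Unshelve. all: by end_near.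
Qed.

(* For P the rising factorial of length m, P(n) tau(n) is eventually nondecreasing. *)
Lemma recurrence_not_rapidly_decreasing (tau : nat -> R) (A B : {poly R}) :
  (forall n, 0 <= tau n) ->
  (forall n : nat, A.[n%:R] * tau n.+1 = B.[n%:R] * tau n) ->
  size A = size B -> lead_coef A = lead_coef B -> A != 0 ->
  (forall N, exists2 n, (N <= n)%N & tau n != 0) ->
  ~ (forall P : {poly R}, (fun n : nat => P.[n%:R] * tau n) @ \oo --> 0).
Proof.
move=> tau_ge0 rec sAB lAB A_neq0.
wlog lA_gt0 : A B rec sAB lAB A_neq0 / 0 < lead_coef A.
  move=> wlog; have : lead_coef A != 0 by rewrite lead_coef_eq0.
  rewrite neq_lt => /orP[lA_lt0|]; last exact: wlog.
  apply: (wlog (- A) (- B)).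
  - by move=> n; rewrite !hornerN !mulNr rec.
  - by rewrite !size_polyN.
  - by rewrite !lead_coefN lAB.
  - by rewrite oppr_eq0.
  - by rewrite lead_coefN oppr_gt0.
move=> tau_inf tau_null.
have [m [N0 _ ratio]] := eventually_rising_ratio sAB lAB lA_gt0.
pose s n := (rising m).[n%:R] * tau n.
have s_mono n : (N0 <= n)%N -> s n <= s n.+1.
  move=> /ratio [An_gt0 le_ratio].
  have n1_gt0 : 0 < n%:R + 1 :> R by rewrite ltr_wpDl.
  rewrite -(ler_pM2r (mulr_gt0 n1_gt0 An_gt0)).
  have -> : s n.+1 * ((n%:R + 1) * A.[n%:R])
          = (rising m).[n%:R] * tau n * ((n%:R + m.+1%:R) * B.[n%:R]).
    rewrite /s -natr1; transitivity
      ((rising m).[n%:R + 1] * (n%:R + 1) * (A.[n%:R] * tau n.+1)); first ring.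
    by rewrite horner_risingS rec; ring.
  by rewrite ler_wpM2l // mulr_ge0 // ltW // rising_gt0.
have [n1 n1_ge tn1] := tau_inf N0.
have s1_gt0 : 0 < s n1 by rewrite mulr_gt0 ?rising_gt0 // lt_def tn1 tau_ge0.
have s_grow k : s n1 <= s (n1 + k)%N.
  elim: k => [|k IH]; first by rewrite addn0.
  by rewrite addnS (le_trans IH) // s_mono // (leq_trans n1_ge) ?leq_addr.
have [N _ s_small] := cvgr0_norm_lt _ (tau_null (rising m)) _ s1_gt0.
have := s_small (n1 + N)%N (leq_addl _ _); rewrite ger0_norm; last first.
  exact: le_trans (ltW s1_gt0) (s_grow N).
by rewrite ltNge s_grow.
Qed.

End RationalRecurrence.

Lemma size_comp_XaddC (R : idomainType) (q : {poly R}) c :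
  size (q \Po ('X + c%:P)) = size q.
Proof. by rewrite size_comp_poly2 // size_XaddC. Qed.

Lemma lead_coef_comp_XaddC (R : idomainType) (q : {poly R}) c :
  lead_coef (q \Po ('X + c%:P)) = lead_coef q.
Proof. by rewrite lead_coef_comp ?size_XaddC // lead_coefXaddC expr1n mulr1. Qed.

Lemma size_central_difference (R : idomainType) (q : {poly R}) :
  (size ((q \Po ('X + 1%:P)) - (q \Po ('X - 1%:P)))%R <= (size q).-1)%N.
Proof.
rewrite -polyCN.
have := @size_sub_same_lead _ (q \Po ('X + 1%:P)) (q \Po ('X + (-1)%:P)).
by rewrite !size_comp_XaddC !lead_coef_comp_XaddC; apply.
Qed.

Section Weight.
Variable R : realType.
Variables (rho : int -> R) (f g : {poly R}).
Implicit Types q r : {poly R}.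
Hypothesis rho_mom : finite_moments rho.
Hypothesis pearson : forall x : int,
  f.[x%:~R + 1] * rho (x + 1) - f.[x%:~R] * rho x = g.[x%:~R] * rho x.

Definition wsum (q : {poly R}) : R := zsum (fun x => q.[x%:~R] * rho x).

Lemma zsummable_poly q : zsummable (fun x : int => q.[x%:~R] * rho x).
Proof.
have -> : (fun x : int => q.[x%:~R] * rho x) =
          (fun x => \sum_(i < size q) q`_i * ((x%:~R) ^+ i * rho x)).
  apply/funext => x; rewrite horner_coef mulr_suml.
  by apply: eq_bigr => i _; rewrite mulrA.
elim: (size q) => [|n IH].
  by under [X in zsummable X]funext => x do rewrite big_ord0; exact: zsummable0.
under [X in zsummable X]funext => x do rewrite big_ord_recr /=.
exact/zsummableD/zsummableZ.
Qed.

Fact wsum_is_linear : linear_for *%R wsum.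
Proof.
move=> a q r; have sq := zsummable_poly q; have sr := zsummable_poly r.
rewrite /wsum -(zsumZ a sq) -(zsumD (zsummableZ a sq) sr).
by apply: eq_zsum => x; rewrite hornerD hornerZ; ring.
Qed.

HB.instance Definition _ :=
  GRing.isLinear.Build R {poly R} R *%R wsum wsum_is_linear.

Definition Al_poly (q : {poly R}) : {poly R} :=
  g * (q \Po ('X + 1%:P)) + f * ((q \Po ('X + 1%:P)) - (q \Po ('X - 1%:P))).

Fact Al_poly_is_linear : linear Al_poly.
Proof. by move=> a q r; rewrite /Al_poly !comp_polyD !comp_polyZ -!mul_polyC; ring. Qed.

HB.instance Definition _ :=
  GRing.isLinear.Build R {poly R} {poly R} *:%R Al_poly Al_poly_is_linear.

Lemma Al_polyE q x : Al f g (fun z => q.[z]) x = (Al_poly q).[x].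
Proof.
rewrite /Al /Al_poly.
by rewrite !(hornerD, hornerM, hornerN, horner_comp, hornerX, hornerC); ring.
Qed.

(* Summation by parts: by the Pearson equation, (q Al(r) + r Al(q)) rho is the
   difference K(x + 1) - K(x) with K = f(x) (q(x - 1) r(x) + r(x - 1) q(x)) rho(x),
   which sums to 0 because K decays at both ends. *)
Lemma wsum_Al_poly_skew q r : wsum (q * Al_poly r) = - wsum (r * Al_poly q).
Proof.
apply/eqP; rewrite -subr_eq0 opprK -linearD /=; apply/eqP.
pose K : {poly R} := f * ((q \Po ('X - 1%:P)) * r + (r \Po ('X - 1%:P)) * q).
have [K0r K0l] := zsummable_cvg0 (zsummable_poly K).
rewrite /wsum -(zsum_telescope (F := fun x => K.[x%:~R] * rho x) K0r K0l).
apply: eq_zsum => x.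
have pearson' : f.[x%:~R + 1] * rho (x + 1) = (g.[x%:~R] + f.[x%:~R]) * rho x.
  by rewrite mulrDl -pearson; ring.
rewrite /K /Al_poly.
rewrite !(hornerD, hornerM, hornerN, horner_comp, hornerX, hornerC) intrD addrK.
set y := x%:~R; transitivity
  (f.[y + 1] * rho (x + 1) * (q.[y] * r.[y + 1] + r.[y] * q.[y + 1])
   - f.[y] * (q.[y - 1] * r.[y] + r.[y - 1] * q.[y]) * rho x); last by ring.
by rewrite pearson'; ring.
Qed.

Lemma wsum_Al_poly_self q : wsum (q * Al_poly q) = 0.
Proof. by have := wsum_Al_poly_skew q q; lra. Qed.

Hypothesis rho_ge0 : forall x : int, 0 <= rho x.
Hypotheses (deg_f : (size f <= 3)%N) (deg_g : (size g <= 2)%N).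

Lemma size_Al_poly q : (size (Al_poly q) <= (size q).+1)%N.
Proof.
have [->|q_neq0] := eqVneq q 0; first by rewrite linear0 size_poly0.
have q_gt0 : (0 < size q)%N by rewrite size_poly_gt0.
apply: (leq_trans (size_polyD _ _)); rewrite geq_max; apply/andP; split.
  apply: (leq_trans (size_polyMleq _ _)); rewrite size_comp_XaddC; move: deg_g q_gt0.
  by move: (size g) (size q) => a b; clear; lia.
apply: (leq_trans (size_polyMleq _ _)).
move: (size_central_difference q) deg_f q_gt0.
by move: (size (_ - _ : {poly R})) (size f) (size q) => d a b; clear; lia.
Qed.

Variable p : nat -> {poly R}.
Hypothesis p_monic : forall n, p n \is monic.
Hypothesis p_size : forall n, size (p n) = n.+1.
Hypothesis p_orth : forall m n, m <> n ->
  zsum (fun x => (p m).[x%:~R] * (p n).[x%:~R] * rho x) = 0.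
Hypothesis h_pos : forall n, 0 < zsum (fun x => (p n).[x%:~R] ^+ 2 * rho x).

Lemma wsum_orth m n : m <> n -> wsum (p m * p n) = 0.
Proof. by move=> /p_orth <-; apply: eq_zsum => x; rewrite hornerM. Qed.

Lemma wsum_sq_gt0 n : 0 < wsum (p n * p n).
Proof.
rewrite (_ : wsum _ = zsum (fun x => (p n).[x%:~R] ^+ 2 * rho x)) //.
by apply: eq_zsum => x; rewrite hornerM expr2.
Qed.

Lemma coef_p_deg n : (p n)`_n = 1.
Proof. by have := p_monic n; rewrite monicE lead_coefE p_size => /eqP. Qed.

Lemma poly_span_p n q :
  (size q <= n)%N -> exists a : nat -> R, q = \sum_(k < n) a k *: p k.
Proof.
elim: n q => [|n IH] q sq.
  by exists (fun=> 0); move: sq; rewrite size_poly_leq0 => /eqP ->; rewrite big_ord0.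
have [|a qE] := IH (q - q`_n *: p n).
  apply/leq_sizeP => j; rewrite leq_eqVlt => /orP[/eqP<-|nj].
    by rewrite coefB coefZ coef_p_deg mulr1 subrr.
  rewrite coefB coefZ [q`_j]nth_default ?(leq_trans sq nj) //.
  by rewrite [(p n)`_j]nth_default ?p_size // mulr0 subrr.
exists (fun k => if k == n then q`_n else a k).
rewrite big_ord_recr /= eqxx (eq_bigr (fun k : 'I_n => a k *: p k)) => [|k _].
  by rewrite -qE subrK.
by rewrite ltn_eqF.
Qed.

Lemma wsum_orth_small m q : (size q <= m)%N -> wsum (p m * q) = 0.
Proof.
move=> /poly_span_p [a ->]; rewrite mulr_sumr linear_sum big1 // => k _.
rewrite -scalerAr linearZ /= wsum_orth ?mulr0 // => mk.
by have := ltn_ord k; rewrite -mk ltnn.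
Qed.

Lemma poly_orth_expansion n q : (size q <= n)%N ->
  q = \sum_(k < n) (wsum (p k * q) / wsum (p k * p k)) *: p k.
Proof.
move=> /poly_span_p [a qE]; rewrite {1}qE; apply: eq_bigr => k _; congr (_ *: _).
rewrite qE mulr_sumr linear_sum (bigD1 k) //= big1 ?addr0 => [|j /negbTE jk].
  by rewrite -scalerAr linearZ /= mulfK // gt_eqF // wsum_sq_gt0.
rewrite -scalerAr linearZ /= wsum_orth ?mulr0 // => kj.
by move: jk; rewrite (_ : j = k) ?eqxx //; apply: val_inj.
Qed.

Lemma wsum_p_Al_poly_p k n : (k.+2 <= n)%N -> wsum (p k * Al_poly (p n)) = 0.
Proof.
move=> kn; rewrite wsum_Al_poly_skew wsum_orth_small ?oppr0 //.
by apply: leq_trans (size_Al_poly _) _; rewrite p_size.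
Qed.

Lemma Al_poly_expansion n : Al_poly (p n) =
  \sum_(k < n.+2) (wsum (p k * Al_poly (p n)) / wsum (p k * p k)) *: p k.
Proof. by apply: poly_orth_expansion; have := size_Al_poly (p n); rewrite p_size. Qed.

Lemma Al_poly_p0 :
  Al_poly (p 0) = (wsum (p 1 * Al_poly (p 0)) / wsum (p 1 * p 1)) *: p 1.
Proof.
rewrite {1}Al_poly_expansion !big_ord_recr big_ord0 /= wsum_Al_poly_self.
by rewrite mul0r scale0r !add0r.
Qed.

Lemma Al_poly_pS n : Al_poly (p n.+1) =
  (wsum (p n.+2 * Al_poly (p n.+1)) / wsum (p n.+2 * p n.+2)) *: p n.+2
  - (wsum (p n.+1 * Al_poly (p n)) / wsum (p n * p n)) *: p n.
Proof.
rewrite {1}Al_poly_expansion !big_ord_recr /= big1 => [|k _]; last first.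
  by rewrite wsum_p_Al_poly_p ?ltnS // mul0r scale0r.
rewrite wsum_Al_poly_self mul0r scale0r addr0 add0r addrC.
by rewrite [wsum (p n * _)]wsum_Al_poly_skew mulNr scaleNr.
Qed.

Lemma p0 : p 0 = 1.
Proof. by rewrite [p 0]size1_polyC ?p_size // coef_p_deg. Qed.

(* Otherwise the monic polynomial vanishing on the support would be orthogonal
   to the p_n of the same degree. *)
Lemma rho_unbounded_support M : exists x : int, (M < `|x|)%N /\ rho x != 0.
Proof.
apply: contrapT => /forallNP rho_out.
have rho0 x : (M < `|x|)%N -> rho x = 0.
  by move=> Mx; apply/eqP; apply: contrapT => /negP rx; apply: (rho_out x).
pose n := M.*2.+1.
pose pi : {poly R} := \prod_(j <- iota 0 n) ('X - ((j%:Z - M%:Z)%:~R)%:P).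
have pi_root x : (`|x| <= M)%N -> pi.[x%:~R] = 0.
  move=> xM; have xM_ge0 : 0 <= x + M%:Z.
    by move: xM; case: x => k /=; rewrite ?NegzE; lia.
  have j_in : absz (x + M%:Z) \in iota 0 n.
    rewrite mem_iota /= add0n /n.
    by move: xM xM_ge0; case: x => k /=; rewrite ?NegzE; lia.
  by rewrite horner_prod (big_rem _ j_in) /= gez0_abs // addrK !hornerE subrr mul0r.
have : wsum (p n * pi) = wsum (p n * p n).
  rewrite -[pi](subrK (p n)) mulrDr linearD /= wsum_orth_small ?add0r //.
  have size_pi : size pi = n.+1 by rewrite size_prod_XsubC size_iota.
  have := @size_sub_same_lead _ pi (p n); rewrite size_pi p_size; apply => //.
  by rewrite (eqP (monic_prod_XsubC _ _ _)) (eqP (p_monic n)).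
rewrite (_ : wsum _ = 0) => [/esym/eqP|]; first by rewrite gt_eqF ?wsum_sq_gt0.
rewrite /wsum -(zsum0 R); apply: eq_zsum => x; rewrite hornerM.
by case: (leqP `|x| M) => [/pi_root ->|/rho0 ->]; rewrite ?mulr0 ?mul0r.
Qed.

Lemma rho_recurrence_not_same_lead (A B : {poly R}) :
  (forall x : int, A.[x%:~R] * rho (x + 1) = B.[x%:~R] * rho x) ->
  size A = size B -> lead_coef A = lead_coef B -> A != 0 -> False.
Proof.
move=> rec sAB lAB A_neq0.
have [right_inf|left_inf] : (forall N, exists2 n, (N <= n)%N & rho n%:Z != 0) \/
                             (forall N, exists2 n, (N <= n)%N & rho (- n%:Z) != 0).
  apply: infinitely_often_or => N; have [x [Nx rx]] := rho_unbounded_support N.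
  exists `|x|%N; first exact: ltnW.
  by case: x Nx rx => k /= _ rx; [left | right; rewrite -NegzE].
- apply: (recurrence_not_rapidly_decreasing (tau := fun n => rho n%:Z)
            _ _ sAB lAB A_neq0).
  + by move=> n.
  + by move=> n; have := rec n%:Z; rewrite -[n%:Z + 1]/((n + 1)%N : int) addn1; apply.
  + exact: right_inf.
  + by move=> P; exact: (zsummable_cvg0 (zsummable_poly P)).1.
- (* on the left, reflect x to -1 - x, which exchanges the roles of A and B *)
  have s2 : size (- 'X - 1 : {poly R}) = 2.
    by rewrite -opprD size_polyN -polyC1 size_XaddC.
  apply: (recurrence_not_rapidly_decreasing (tau := fun n => rho (- n%:Z))
            (A := B \Po (- 'X - 1)) (B := A \Po (- 'X - 1))).
  + by move=> n.
  + move=> n; have := rec (- n.+1%:Z).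
    have -> : - n.+1%:Z + 1 = - n%:Z by rewrite -addn1 PoszD opprD addrNK.
    have -> : (- n.+1%:Z)%:~R = - n%:R - 1 :> R by rewrite intrN -pmulrn -natr1 opprD.
    by rewrite !horner_comp !hornerE => ->.
  + by rewrite !size_comp_poly2 ?sAB.
  + by rewrite !lead_coef_comp ?s2 // sAB lAB.
  + by rewrite -size_poly_gt0 size_comp_poly2 // -sAB size_poly_gt0.
  + exact: left_inf.
  + move=> P; rewrite (_ : (fun n : nat => _) =
                  fun n : nat => (P \Po - 'X).[(- n%:Z)%:~R] * rho (- n%:Z)).
      exact: (zsummable_cvg0 (zsummable_poly _)).2.
    by apply/funext => n; rewrite horner_comp hornerN hornerX intrN opprK.
Qed.

Lemma rho_shift_pearson x :
  (f \Po ('X + 1%:P)).[x%:~R] * rho (x + 1) = (f + g).[x%:~R] * rho x.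
Proof. by rewrite horner_comp !hornerE; have := pearson x; lra. Qed.

Lemma size_f_le2 : (size f <= 2)%N.
Proof.
rewrite leqNgt; apply/negP => f_gt2.
apply: (@rho_recurrence_not_same_lead (f \Po ('X + 1%:P)) (f + g)).
- exact: rho_shift_pearson.
- by rewrite size_comp_XaddC size_polyDl // (leq_ltn_trans deg_g).
- by rewrite lead_coef_comp_XaddC lead_coefDl // (leq_ltn_trans deg_g).
- by rewrite -size_poly_gt0 size_comp_XaddC (ltn_trans _ f_gt2).
Qed.

Lemma g1_neq0 : f != 0 -> g`_1 != 0.
Proof.
move=> f_neq0; apply/negP => /eqP g1.
have gE : g = (g`_0)%:P.
  apply: size1_polyC; apply/leq_sizeP => -[//|[|j]] _; first by rewrite g1.
  by rewrite nth_default // (leq_trans deg_g).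
have Al1 : Al_poly 1 = g.
  by rewrite /Al_poly -polyC1 !comp_polyC subrr mulr0 addr0 mulr1.
have w1_neq0 : wsum 1 != 0 by have := wsum_sq_gt0 0; rewrite p0 mulr1 => /gt_eqF ->.
have g_eq0 : g = 0.
  have := wsum_Al_poly_self 1.
  rewrite Al1 mul1r {1}gE -[_%:P]mulr1 mul_polyC linearZ /=.
  by move/eqP; rewrite mulf_eq0 (negbTE w1_neq0) orbF => /eqP g0; rewrite gE g0.
apply: (@rho_recurrence_not_same_lead (f \Po ('X + 1%:P)) f).
- by move=> x; rewrite rho_shift_pearson g_eq0 addr0.
- exact: size_comp_XaddC.
- exact: lead_coef_comp_XaddC.
- by rewrite -size_poly_gt0 size_comp_XaddC size_poly_gt0.
Qed.

(* A quadratic f would contribute to the coefficient of x^(n+1). *)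
Lemma size_Al_poly_p_sub n : (size (Al_poly (p n) - g`_1 *: p n.+1)%R <= n.+1)%N.
Proof.
have gE : g = g`_1 *: 'X + (g`_0)%:P.
  apply/polyP => -[|[|i]];
    rewrite coefD coefZ coefX coefC ?mulr0 ?mulr1 ?add0r ?addr0 //=.
  by rewrite nth_default // (leq_trans deg_g).
set s := p n \Po ('X + 1%:P).
have -> : Al_poly (p n) - g`_1 *: p n.+1 =
    g`_1 *: (s * 'X - p n.+1) + g`_0 *: s + f * (s - (p n \Po ('X - 1%:P))).
  by rewrite /Al_poly -/s {1}gE -!mul_polyC; ring.
have size_s : size s = n.+1 by rewrite size_comp_XaddC p_size.
apply: leq_trans (size_polyD _ _) _; rewrite geq_max; apply/andP; split.
  apply: leq_trans (size_polyD _ _) _; rewrite geq_max; apply/andP; split.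
    apply: leq_trans (size_scale_leq _ _) _.
    have := @size_sub_same_lead _ (s * 'X) (p n.+1).
    rewrite size_mulX -?size_poly_gt0 ?size_s // p_size.
    rewrite lead_coefMX lead_coef_comp_XaddC.
    by rewrite (eqP (p_monic n)) (eqP (p_monic n.+1)); apply.
  by rewrite (leq_trans (size_scale_leq _ _)) ?size_s.
apply: leq_trans (size_polyMleq _ _) _.
move: (size_central_difference (p n)) size_f_le2; rewrite p_size.
by move: (size (_ - _ : {poly R})) (size f) => d a; clear; lia.
Qed.

Lemma wsum_p_Al_poly_p_succ n :
  wsum (p n.+1 * Al_poly (p n)) = g`_1 * wsum (p n.+1 * p n.+1).
Proof.
rewrite -[Al_poly (p n)](subrK (g`_1 *: p n.+1)) mulrDr linearD /=.
by rewrite wsum_orth_small ?size_Al_poly_p_sub // add0r -scalerAr linearZ.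
Qed.

End Weight.

Lemma pfaffian0 (R : realType) n : pfaffian (0 : 'M[R]_(n.+1.*2)) = 0.
Proof.
rewrite /pfaffian big1 ?mulr0 // => s _.
by rewrite big_ord_recl mxE mul0r; exact: mulr0.
Qed.

Lemma skew_moment_mx0 (R : realType) n : skew_moment_mx (fun _ => 0 : R) n = 0.
Proof.
apply/matrixP => i j; rewrite !mxE -[RHS](zsum0 R); apply: eq_zsum => x; exact: mulr0.
Qed.

Section SkewKernel.
Variable R : fieldType.
Variables (A : {linear {poly R} -> {poly R}}) (p : nat -> {poly R}) (h c : nat -> R).

Definition skewQ n : {poly R} :=
  if odd n then p n
  else \sum_(0 <= l < (n./2).+1)
         (\prod_(l <= j < n./2) (c (j.*2.+1) / c (j.*2))) *: p (l.*2).

Definition skew_kernel N (x : R) : {poly R} :=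
  \sum_(0 <= i < N) (c i.*2)^-1 *:
    ((skewQ i.*2).[x] *: skewQ i.*2.+1 - (skewQ i.*2.+1).[x] *: skewQ i.*2).

Lemma skewQ_odd i : skewQ i.*2.+1 = p i.*2.+1.
Proof. by rewrite /skewQ /= odd_double. Qed.

Lemma skewQ0 : skewQ 0 = p 0.
Proof. by rewrite /skewQ /= big_nat1 big_geq // scale1r. Qed.

Lemma skewQ_even_rec i : skewQ i.*2.+2 = p i.*2.+2 + (c i.*2.+1 / c i.*2) *: skewQ i.*2.
Proof.
rewrite /skewQ /= !odd_double /= -doubleS !doubleK big_nat_recr //=.
rewrite [\prod_(i.+1 <= j < i.+1) _]big_geq // scale1r addrC; congr (_ + _).
rewrite scaler_sumr; apply: eq_big_nat => l /andP[_ li].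
by rewrite big_nat_recr //= scalerA mulrC.
Qed.

Hypothesis A_p0 : A (p 0) = (- c 0 / h 1) *: p 1.
Hypothesis A_pS : forall n,
  A (p n.+1) = (- c n.+1 / h n.+2) *: p n.+2 + (c n / h n) *: p n.
Hypothesis h_neq0 : forall n, h n != 0.
Hypothesis c_even_neq0 : forall n, c n.*2 != 0.

(* The weights in Q_{2i} are chosen so that the p_{2i-1} components cancel. *)
Lemma A_skewQ_even i : A (skewQ i.*2) = (- c i.*2 / h i.*2.+1) *: p i.*2.+1.
Proof.
elim: i => [|i IH]; first by rewrite skewQ0 A_p0.
rewrite doubleS skewQ_even_rec linearD linearZ /= IH A_pS scalerA -addrA -scalerDl.
have -> : c i.*2.+1 / h i.*2.+1 + c i.*2.+1 / c i.*2 * (- c i.*2 / h i.*2.+1) = 0.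
  by field; rewrite h_neq0 c_even_neq0.
by rewrite scale0r addr0.
Qed.

Lemma skew_kernel_identity N x y :
  \sum_(0 <= m < N.+1) (p m.*2).[x] * (p m.*2).[y] / h m.*2
  + \sum_(0 <= m < N.+1) (p m.*2.+1).[x] * (p m.*2.+1).[y] / h m.*2.+1
  = (A (skew_kernel N.+1 x)).[y]
    + c N.*2.+1 / c N.*2 / h N.*2.+2 * (p N.*2.+2).[y] * (skewQ N.*2).[x].
Proof.
(* Each summand of A S_N contributes one even and one odd term of the
   Christoffel-Darboux sum, up to a telescoping difference of W. *)
pose W i := ((p i.*2).[x] - (skewQ i.*2).[x]) * (p i.*2).[y] / h i.*2.
have term i : (A ((c i.*2)^-1 *:
    ((skewQ i.*2).[x] *: skewQ i.*2.+1 - (skewQ i.*2.+1).[x] *: skewQ i.*2))).[y]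
  = (p i.*2).[x] * (p i.*2).[y] / h i.*2 + (p i.*2.+1).[x] * (p i.*2.+1).[y] / h i.*2.+1
    + (W i.+1 - W i).
  rewrite linearZ linearB !linearZ /= skewQ_odd A_skewQ_even A_pS.
  rewrite /W doubleS skewQ_even_rec.
  rewrite !(hornerZ, hornerD, hornerN); field.
  by rewrite !h_neq0 c_even_neq0.
rewrite /skew_kernel linear_sum horner_sum (eq_bigr _ (fun i _ => term i)) big_split.
rewrite telescope_sumr // big_split /= {2}/W skewQ0 subrr !mul0r subr0.
rewrite /W doubleS skewQ_even_rec.
rewrite !(hornerD, hornerZ); field.
by rewrite h_neq0 c_even_neq0.
Qed.

End SkewKernel.
Theorem mainTheorem5 (R : realType) (rho : int -> R) (f g : {poly R})
  (p : nat -> {poly R})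
  (rho_ge0 : forall x : int, 0 <= rho x)
  (rho_mom : finite_moments rho)
  (deg_f : (size f <= 3)%N) (deg_g : (size g <= 2)%N)
  (pearson : forall x : int,
     f.[x%:~R + 1] * rho (x + 1) - f.[x%:~R] * rho x = g.[x%:~R] * rho x)
  (bd_left : forall a : int, is_left_endpoint rho a -> f.[a%:~R] * rho a = 0)
  (bd_right : forall b : int, is_right_endpoint rho b -> f.[b%:~R] * rho b = 0)
  (p_monic : forall n, p n \is monic)
  (p_size : forall n, size (p n) = n.+1)
  (p_orth : forall m n, m <> n ->
     zsum (fun x => (p m).[x%:~R] * (p n).[x%:~R] * rho x) = 0)
  (h_pos : forall n, 0 < zsum (fun x => (p n).[x%:~R] ^+ 2 * rho x))
  (pf_nz : forall n : nat, (0 < n)%N ->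
     pfaffian (skew_moment_mx (fun x => f.[x%:~R + 1] * rho (x + 1)) n) != 0) :
  let h n := zsum (fun x => (p n).[x%:~R] ^+ 2 * rho x) in
  let c n := - zsum (fun x => (p n.+1).[x%:~R] *
                               Al f g (fun z => (p n).[z]) x%:~R * rho x) in
  let Q n : {poly R} :=
    if odd n then p n
    else \sum_(0 <= l < (n./2).+1)
           (\prod_(l <= j < n./2) (c (j.*2.+1) / c (j.*2))) *: p (l.*2) in
  let u n := c (n.*2) in
  let S N (x y : R) := \sum_(0 <= i < N)
       (u i)^-1 * ((Q (i.*2)).[x] * (Q (i.*2.+1)).[y]
                   - (Q (i.*2)).[y] * (Q (i.*2.+1)).[x]) in
  forall N : nat, (1 <= N)%N ->
  let t := - (c (N.*2.-1) / c (N.*2 - 2)%N) in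
  forall x y : R,
    \sum_(0 <= m < N) (p (m.*2)).[x] * (p (m.*2)).[y] / h (m.*2)
    + \sum_(0 <= m < N) (p (m.*2.+1)).[x] * (p (m.*2.+1)).[y] / h (m.*2.+1)
    = Al f g (fun z => S N x z) y - t / h (N.*2) * (p (N.*2)).[y] * (Q (N.*2 - 2)%N).[x].
Proof.
move=> h c Q u S N N_gt0 t x y.
have hE n : h n = wsum rho (p n * p n).
  by apply: eq_zsum => z; rewrite hornerM expr2.
have cE n : c n = - wsum rho (p n.+1 * Al_poly f g (p n)).
  by congr (- _); apply: eq_zsum => z; rewrite hornerM Al_polyE.
have f_neq0 : f != 0.
  apply: contraNneq (pf_nz 1 (ltn0Sn 0)) => f0; apply/eqP.
  rewrite (_ : (fun x => _) = fun=> 0) ?skew_moment_mx0 ?pfaffian0 //.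
  by apply/funext => z; rewrite f0 horner0 mul0r.
have h_neq0 n : h n != 0 := lt0r_neq0 (h_pos n).
have c_neq0 n : c n != 0.
  rewrite cE (wsum_p_Al_poly_p_succ rho_mom pearson rho_ge0 deg_f deg_g
                p_monic p_size p_orth h_pos) -hE oppr_eq0 mulf_neq0 //.
  exact: (g1_neq0 rho_mom pearson rho_ge0 deg_f deg_g p_monic p_size p_orth h_pos).
have A_p0 : Al_poly f g (p 0) = (- c 0 / h 1) *: p 1.
  rewrite (Al_poly_p0 rho_mom pearson deg_f deg_g p_monic p_size p_orth h_pos).
  by rewrite cE hE opprK.
have A_pS n : Al_poly f g (p n.+1) = (- c n.+1 / h n.+2) *: p n.+2 + (c n / h n) *: p n.
  rewrite (Al_poly_pS rho_mom pearson deg_f deg_g p_monic p_size p_orth h_pos) !cE !hE.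
  by rewrite opprK mulNr scaleNr.
have SE : (fun z => S N x z) = fun z => (skew_kernel p c N x).[z].
  apply/funext => z; rewrite /S /skew_kernel horner_sum; apply: eq_bigr => i _.
  by rewrite !(hornerZ, hornerD, hornerN); ring.
case: N N_gt0 @t SE => [//|N] _ t SE.
rewrite SE Al_polyE (skew_kernel_identity A_p0 A_pS h_neq0 (fun n => c_neq0 n.*2)).
by rewrite /t doubleS !subSS subn0 !mulNr opprK.
Qed.
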